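(* Let $\rho$ be a smooth function on an open interval $I\subset(0,\infty)$ or $I\subset(-\infty,0)$ with $\rho(t)\neq0$ for all $t\in I$, and let $\mu,\sigma$ be nonzero constants. Let $U(r,y),V(r,y)$ be smooth functions on $\mathbb{R}^2$ and define, for $(x,y,t)\in\mathbb{R}^2\times I$, $$u(x,y,t)=\Big(\frac{\rho(t)}{t}\Big)^{1/3}U\Big(\Big(\frac{\rho(t)}{t}\Big)^{1/3}x,\,y\Big),\qquad v(x,y,t)=\Big(\frac{\rho(t)}{t}\Big)^{2/3}V\Big(\Big(\frac{\rho(t)}{t}\Big)^{1/3}x,\,y\Big)-\frac{\rho'(t)}{9\mu}x,$$ with real cube roots. Then $(u,v)$ solves $$\rho(t)u_t+3\mu(uv)_x+\sigma u_{xxx}=0,\qquad u_x=v_y$$ if and only if $(U,V)$ solves $$-\tfrac13\big(U+rU_r\big)+3\mu(UV)_r+\sigma U_{rrr}=0,\qquad U_r-V_y=0.$$ *)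

From Stdlib Require Import Reals List.
From Coquelicot Require Import Coquelicot.
Open Scope R_scope.

Definition cbrt (x : R) : R :=
  if Rlt_dec 0 x then Rpower x (1/3)
  else if Rlt_dec x 0 then - Rpower (- x) (1/3) else 0.

Definition is_open_interval (I : R -> Prop) : Prop :=
  exists a b : Rbar, Rbar_lt a b /\ forall t, I t <-> (Rbar_lt a t /\ Rbar_lt t b).

Definition smooth_on (I : R -> Prop) (f : R -> R) : Prop :=
  forall (n : nat) (t : R), I t -> ex_derive_n f n t.

(** Iterated partial derivatives of f : R -> R -> R;
    [true] = derivative in the first variable, [false] = in the second. *)
Fixpoint pderivs (l : list bool) (f : R -> R -> R) : R -> R -> R :=
  match l with
  | nil => f
  | b :: l' =>
      let g := pderivs l' f in
      if b then (fun x y => Derive (fun x' => g x' y) x)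
      else (fun x y => Derive (fun y' => g x y') y)
  end.

Definition smooth2 (f : R -> R -> R) : Prop :=
  forall (l : list bool),
    (forall x y, ex_derive (fun x' => pderivs l f x' y) x /\
                 ex_derive (fun y' => pderivs l f x y') y) /\
    (forall p : R * R,
        continuous (fun q : R * R => pderivs l f (fst q) (snd q)) p).

Definition scal (rho : R -> R) (t : R) : R := cbrt (rho t / t).

Definition u_of (rho : R -> R) (U : R -> R -> R) (x y t : R) : R :=
  scal rho t * U (scal rho t * x) y.

Definition v_of (rho : R -> R) (mu : R) (V : R -> R -> R) (x y t : R) : R :=
  (scal rho t) ^ 2 * V (scal rho t * x) y - Derive rho t / (9 * mu) * x.

Definition solves_uv (I : R -> Prop) (rho : R -> R) (mu sigma : R)
    (u v : R -> R -> R -> R) : Prop :=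
  forall x y t, I t ->
    rho t * Derive (fun t' => u x y t') t
      + 3 * mu * Derive (fun x' => u x' y t * v x' y t) x
      + sigma * Derive_n (fun x' => u x' y t) 3 x = 0 /\
    Derive (fun x' => u x' y t) x = Derive (fun y' => v x y' t) y.

Definition solves_UV (mu sigma : R) (U V : R -> R -> R) : Prop :=
  forall r y,
    - (1/3) * (U r y + r * Derive (fun r' => U r' y) r)
      + 3 * mu * Derive (fun r' => U r' y * V r' y) r
      + sigma * Derive_n (fun r' => U r' y) 3 r = 0 /\
    Derive (fun r' => U r' y) r - Derive (fun y' => V r y') y = 0.

(* With s(t) = (rho(t)/t)^(1/3) and r = s x, differentiating s^3 = rho/t gives
   rho s' = (s rho' - s^4)/3.  Substituting the ansatz, the rho' terms coming from
   rho u_t and from the drift -rho' x/(9 mu) in v cancel, and the first equation at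
   (x,y,t) becomes s^4 times the profile equation at (r,y), while u_x - v_y becomes
   s^2 (U_r - V_y).  As s <> 0, x |-> s x is onto for any fixed t in I. *)
From Pilot Require Import Defs.
From Stdlib Require Import Reals Lra List.
From Coquelicot Require Import Coquelicot.
(* Re-imported so that [scal] denotes [Defs.scal], not Coquelicot's module scaling. *)
Import Defs.
Open Scope R_scope.

Lemma cbrt_cube (z : R) : cbrt z ^ 3 = z.
Proof.
  assert (Rpower_third_cube : forall w, 0 < w -> Rpower w (1/3) ^ 3 = w).
  { intros w Hw. rewrite <- Rpower_pow by apply exp_pos.
    rewrite Rpower_mult. replace (1/3 * INR 3) with 1 by (simpl; field).
    now apply Rpower_1. }
  unfold cbrt; destruct (Rlt_dec 0 z); [now apply Rpower_third_cube|].
  destruct (Rlt_dec z 0); [|simpl; lra].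
  replace ((- Rpower (- z) (1/3)) ^ 3) with (- (Rpower (- z) (1/3) ^ 3)) by ring.
  rewrite Rpower_third_cube by lra. ring.
Qed.

Lemma cbrt_neq0 (z : R) : z <> 0 -> cbrt z <> 0.
Proof.
  intros Hz E. apply Hz. rewrite <- (cbrt_cube z), E. ring.
Qed.

Lemma ex_derive_cbrt (z : R) : z <> 0 -> ex_derive cbrt z.
Proof.
  intros Hz. destruct (Rlt_dec 0 z) as [Hpos|Hnpos].
  - exists (1/3 * / z * exp (1/3 * ln z)).
    apply is_derive_ext_loc with (f := fun w => exp (1/3 * ln w)).
    + apply (filter_imp (fun w => 0 < w)); [|now apply open_gt].
      intros w Hw. unfold cbrt, Rpower. now destruct (Rlt_dec 0 w).
    + auto_derive; [lra|]. field. lra.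
  - exists (1/3 * / (- z) * exp (1/3 * ln (- z))).
    apply is_derive_ext_loc with (f := fun w => - exp (1/3 * ln (- w))).
    + apply (filter_imp (fun w => w < 0)); [|apply open_lt; lra].
      intros w Hw. unfold cbrt, Rpower.
      destruct (Rlt_dec 0 w); [lra|]. now destruct (Rlt_dec w 0).
    + auto_derive; [lra|]. field. lra.
Qed.

Lemma Derive_cbrt_comp (q : R -> R) (t : R) : ex_derive q t -> q t <> 0 ->
  3 * cbrt (q t) ^ 2 * Derive (fun t' => cbrt (q t')) t = Derive q t.
Proof.
  intros Hq Hq0.
  assert (Hc : ex_derive (fun t' => cbrt (q t')) t)
    by (apply (ex_derive_comp cbrt q); auto using ex_derive_cbrt).
  rewrite <- (Derive_ext (fun t' => cbrt (q t') ^ 3) q) by (intro; apply cbrt_cube).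
  rewrite Derive_pow by exact Hc. simpl. ring.
Qed.

Section Scaling.

Variables (rho : R -> R) (t : R).
Hypotheses (Ht : t <> 0) (Hrho : rho t <> 0) (Hrho' : ex_derive rho t).

Let ex_derive_ratio : ex_derive (fun t' => rho t' / t') t.
Proof.
  apply ex_derive_div; auto. apply ex_derive_id.
Qed.

Let ratio_neq0 : rho t / t <> 0.
Proof.
  unfold Rdiv. apply Rmult_integral_contrapositive. split; auto with real.
Qed.

Lemma scal_cube : scal rho t ^ 3 = rho t / t.
Proof. exact (cbrt_cube (rho t / t)). Qed.

Lemma scal_neq0 : scal rho t <> 0.
Proof. exact (cbrt_neq0 _ ratio_neq0). Qed.

Lemma ex_derive_scal_rho : ex_derive (scal rho) t.
Proof.
  apply (ex_derive_comp cbrt (fun t' => rho t' / t')); [|exact ex_derive_ratio].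
  exact (ex_derive_cbrt _ ratio_neq0).
Qed.

(* With [s^3 = rho/t], differentiating gives [3 s^2 s' = rho'/t - rho/t^2];
   multiplying by [s t / 3] yields the identity below. *)
Lemma rho_Derive_scal :
  rho t * Derive (scal rho) t = (scal rho t * Derive rho t - scal rho t ^ 4) / 3.
Proof.
  assert (Hcube := Derive_cbrt_comp (fun t' => rho t' / t') t ex_derive_ratio ratio_neq0).
  rewrite Derive_div, Derive_id in Hcube by auto using ex_derive_id.
  change (cbrt (rho t / t)) with (scal rho t) in Hcube.
  change (fun t' => cbrt (rho t' / t')) with (scal rho) in Hcube.
  assert (Hrho_eq : rho t = scal rho t ^ 3 * t) by (rewrite scal_cube; field; exact Ht).
  rewrite Hrho_eq in Hcube |- *.
  replace (scal rho t ^ 3 * t * Derive (scal rho) t)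
    with (scal rho t * t / 3 * (3 * scal rho t ^ 2 * Derive (scal rho) t)) by field.
  rewrite Hcube. field. exact Ht.
Qed.

End Scaling.

Section Smooth2.

Variable f : R -> R -> R.
Hypothesis Hf : smooth2 f.

Lemma smooth2_ex_derive_x (x y : R) : ex_derive (fun x' => f x' y) x.
Proof. exact (proj1 (proj1 (Hf nil) x y)). Qed.

Lemma smooth2_ex_derive_y (x y : R) : ex_derive (fun y' => f x y') y.
Proof. exact (proj2 (proj1 (Hf nil) x y)). Qed.

Lemma Derive_n_pderivs_x (n : nat) (x y : R) :
  Derive_n (fun x' => f x' y) n x = pderivs (repeat true n) f x y.
Proof.
  revert x; induction n as [|n IHn]; intros x; [reflexivity|].
  simpl. apply Derive_ext. intros; apply IHn.
Qed.

Lemma smooth2_ex_derive_n_x (n : nat) (x y : R) : ex_derive_n (fun x' => f x' y) n x.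
Proof.
  destruct n as [|n]; [exact I|].
  apply ex_derive_ext with (f := fun x' => pderivs (repeat true n) f x' y).
  - intros; symmetry; apply Derive_n_pderivs_x.
  - exact (proj1 (proj1 (Hf (repeat true n)) x y)).
Qed.

End Smooth2.

Lemma Derive_comp_scal (f : R -> R) (a x : R) : ex_derive f (a * x) ->
  Derive (fun x' => f (a * x')) x = a * Derive f (a * x).
Proof.
  intros Hf. rewrite (Derive_comp f (fun x' => a * x')) by auto using ex_derive_scal, ex_derive_id.
  rewrite Derive_scal, Derive_id. ring.
Qed.

Definition evolution_residual (rho : R -> R) (mu sigma : R) (u v : R -> R -> R -> R)
    (x y t : R) : R :=
  rho t * Derive (fun t' => u x y t') t
    + 3 * mu * Derive (fun x' => u x' y t * v x' y t) x
    + sigma * Derive_n (fun x' => u x' y t) 3 x.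

Definition profile_residual (mu sigma : R) (U V : R -> R -> R) (r y : R) : R :=
  - (1/3) * (U r y + r * Derive (fun r' => U r' y) r)
    + 3 * mu * Derive (fun r' => U r' y * V r' y) r
    + sigma * Derive_n (fun r' => U r' y) 3 r.

Section SelfSimilar.

Variables (rho : R -> R) (mu sigma : R) (U V : R -> R -> R) (x y t : R).
Hypotheses (Ht : t <> 0) (Hrho : rho t <> 0) (Hrho' : ex_derive rho t) (Hmu : mu <> 0).
Hypotheses (HU : smooth2 U) (HV : smooth2 V).

Let s := scal rho t.
Let r := s * x.
Let Ur := Derive (fun r' => U r' y) r.

Lemma Derive_u_of_t :
  Derive (fun t' => u_of rho U x y t') t = Derive (scal rho) t * (U r y + r * Ur).
Proof.
  unfold u_of.
  assert (Hlin : ex_derive (fun t' => scal rho t' * x) t)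
    by (apply ex_derive_mult; auto using ex_derive_scal_rho, ex_derive_const).
  assert (Hcomp : ex_derive (fun t' => U (scal rho t' * x) y) t)
    by (apply (ex_derive_comp (fun r' => U r' y)); auto using smooth2_ex_derive_x).
  rewrite Derive_mult by auto using ex_derive_scal_rho.
  rewrite (Derive_comp (fun r' => U r' y) (fun t' => scal rho t' * x))
    by auto using smooth2_ex_derive_x.
  rewrite Derive_scal_l. unfold Ur, r, s. ring.
Qed.

Lemma Derive_u_of_x : Derive (fun x' => u_of rho U x' y t) x = s ^ 2 * Ur.
Proof.
  unfold u_of. rewrite Derive_scal, (Derive_comp_scal (fun r' => U r' y))
    by apply smooth2_ex_derive_x, HU.
  unfold Ur, r, s. ring.
Qed.

Lemma Derive_n_u_of_x : Derive_n (fun x' => u_of rho U x' y t) 3 x =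
  s ^ 4 * Derive_n (fun r' => U r' y) 3 r.
Proof.
  unfold u_of. rewrite Derive_n_scal_l, (Derive_n_comp_scal (fun r' => U r' y)).
  - unfold r, s. ring.
  - apply filter_forall. intros; apply smooth2_ex_derive_n_x, HU.
Qed.

Lemma Derive_v_of_y :
  Derive (fun y' => v_of rho mu V x y' t) y = s ^ 2 * Derive (fun y' => V r y') y.
Proof.
  unfold v_of. rewrite Derive_minus, Derive_const, Derive_scal
    by auto using ex_derive_scal, ex_derive_const, smooth2_ex_derive_y.
  rewrite Rminus_0_r. reflexivity.
Qed.

Lemma Derive_uv_x :
  Derive (fun x' => u_of rho U x' y t * v_of rho mu V x' y t) x =
  s ^ 4 * Derive (fun r' => U r' y * V r' y) r - Derive rho t / (9 * mu) * s * (U r y + r * Ur).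
Proof.
  assert (HVr : ex_derive (fun x' => V (s * x') y) x)
    by (apply (ex_derive_comp (fun r' => V r' y)); auto using smooth2_ex_derive_x,
          ex_derive_scal, ex_derive_id).
  assert (Hv : Derive (fun x' => v_of rho mu V x' y t) x =
               s ^ 3 * Derive (fun r' => V r' y) r - Derive rho t / (9 * mu)).
  { unfold v_of. rewrite Derive_minus, !Derive_scal, Derive_id,
      (Derive_comp_scal (fun r' => V r' y)) by auto using ex_derive_scal, ex_derive_id,
        smooth2_ex_derive_x.
    unfold r, s. ring. }
  rewrite Derive_mult.
  - rewrite Derive_u_of_x, Hv, Derive_mult by auto using smooth2_ex_derive_x.
    unfold u_of, v_of. fold s r. unfold Ur, r. field. exact Hmu.
  - unfold u_of. apply ex_derive_scal, (ex_derive_comp (fun r' => U r' y));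
      auto using smooth2_ex_derive_x, ex_derive_scal, ex_derive_id.
  - unfold v_of. apply (ex_derive_minus (fun x' => s ^ 2 * V (s * x') y));
      auto using ex_derive_scal, ex_derive_id.
Qed.

Lemma evolution_residual_scal :
  evolution_residual rho mu sigma (u_of rho U) (v_of rho mu V) x y t =
  s ^ 4 * profile_residual mu sigma U V r y.
Proof.
  unfold evolution_residual, profile_residual.
  rewrite Derive_u_of_t, Derive_uv_x, Derive_n_u_of_x by assumption.
  rewrite <- Rmult_assoc, rho_Derive_scal by assumption.
  fold s Ur. field. exact Hmu.
Qed.

Lemma Derive_u_of_x_sub_v_of_y :
  Derive (fun x' => u_of rho U x' y t) x - Derive (fun y' => v_of rho mu V x y' t) y =
  s ^ 2 * (Ur - Derive (fun y' => V r y') y).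
Proof.
  rewrite Derive_u_of_x, Derive_v_of_y by assumption. ring.
Qed.

Lemma self_similar_equations_iff :
  (evolution_residual rho mu sigma (u_of rho U) (v_of rho mu V) x y t = 0 /\
   Derive (fun x' => u_of rho U x' y t) x = Derive (fun y' => v_of rho mu V x y' t) y) <->
  (profile_residual mu sigma U V r y = 0 /\ Ur - Derive (fun y' => V r y') y = 0).
Proof.
  assert (Hs : s <> 0) by (apply scal_neq0; assumption).
  rewrite evolution_residual_scal.
  split; intros [Hevol Hdiv]; split.
  - apply (Rmult_eq_reg_l (s ^ 4)); [rewrite Hevol; ring | now apply pow_nonzero].
  - apply Rminus_diag_eq in Hdiv. rewrite Derive_u_of_x_sub_v_of_y in Hdiv.
    apply (Rmult_eq_reg_l (s ^ 2)); [rewrite Hdiv; ring | now apply pow_nonzero].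
  - rewrite Hevol. ring.
  - apply Rminus_diag_uniq. rewrite Derive_u_of_x_sub_v_of_y, Hdiv. ring.
Qed.

End SelfSimilar.

Lemma open_interval_inhabited (I : R -> Prop) : is_open_interval I -> exists t, I t.
Proof.
  intros [a [b [Hab HI]]].
  destruct a as [a| |]; destruct b as [b| |]; simpl in Hab; try contradiction.
  - exists ((a + b) / 2). apply HI. simpl. lra.
  - exists (a + 1). apply HI. simpl. lra.
  - exists (b - 1). apply HI. simpl. lra.
  - exists 0. now apply HI.
Qed.

Theorem mainTheorem4 (Iv : R -> Prop) (rho : R -> R) (mu sigma : R)
  (U V : R -> R -> R) :
  is_open_interval Iv ->
  ((forall t, Iv t -> 0 < t) \/ (forall t, Iv t -> t < 0)) ->
  smooth_on Iv rho ->
  (forall t, Iv t -> rho t <> 0) ->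
  mu <> 0 -> sigma <> 0 ->
  smooth2 U -> smooth2 V ->
  (solves_uv Iv rho mu sigma (u_of rho U) (v_of rho mu V)
   <-> solves_UV mu sigma U V).
Proof.
  intros HI Hsign Hsmooth Hrho Hmu _ HU HV.
  assert (Ht : forall t, Iv t -> t <> 0)
    by (intros t It; destruct Hsign as [Hpos|Hneg];
        [specialize (Hpos t It) | specialize (Hneg t It)]; lra).
  assert (Hrho' : forall t, Iv t -> ex_derive rho t) by exact (fun t It => Hsmooth 1%nat t It).
  split.
  - intros Huv r y. destruct (open_interval_inhabited Iv HI) as [t It].
    assert (Hs : scal rho t <> 0) by (apply scal_neq0; auto).
    assert (Heq := self_similar_equations_iff rho mu sigma U V (r / scal rho t) y t
                     (Ht t It) (Hrho t It) (Hrho' t It) Hmu HU HV).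
    replace (scal rho t * (r / scal rho t)) with r in Heq by (field; exact Hs).
    apply Heq, Huv, It.
  - intros HUV x y t It.
    apply (self_similar_equations_iff rho mu sigma U V x y t (Ht t It) (Hrho t It) (Hrho' t It)
             Hmu HU HV), HUV.
Qed.
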